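(* Let $n\ge1$, let $B=\{\cos(\theta)|0\rangle+\sin(\theta)|1\rangle\mid0\le\theta<2\pi\}$ and $\mathcal S=B^{\otimes n}=\{|b_1\rangle\otimes\cdots\otimes|b_n\rangle\mid|b_j\rangle\in B\}$. (i) There exists a randomization procedure for $\mathcal S$ whose probability distribution has Shannon entropy $H(p_1,\dots,p_N)=n$. (ii) Every randomization procedure for $\mathcal S$ (using any number of ancilla qubits) has $H(p_1,\dots,p_N)\ge n$.
   Context: $\mathcal{H}_{2^k}$ denotes the Hilbert space of $k$ qubits; $H(p_1,\dots,p_N)=-\sum_ip_i\log_2p_i$. A randomization procedure for a set $\mathcal S\subseteq\mathcal H_{2^n}$ of pure $n$-qubit states consists of an integer $m\ge n$, probabilities $p_1,\dots,p_N\ge0$ with $\sum_ip_i=1$, unitaries $U_1,\dots,U_N$ on $\mathcal H_{2^m}$, an $(m-n)$-qubit density matrix $\rho_a$ (ancilla) and an $m$-qubit density matrix $\rho_0$ such that $\sum_{i=1}^Np_iU_i(|\phi\rangle\langle\phi|\otimes\rho_a)U_i^\dagger=\rho_0$ for every $|\phi\rangle\in\mathcal S$ (the entropy generated is $H(p_1,\dots,p_N)$). *)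

From HB Require Import structures.
From mathcomp Require Import all_boot all_order all_algebra.
From mathcomp Require Import spectral.
From mathcomp Require Import complex mxtens.
From mathcomp Require Import reals exp trigo.
Set Implicit Arguments. Unset Strict Implicit. Unset Printing Implicit Defensive.
Import Order.TTheory GRing.Theory Num.Theory.
Local Open Scope ring_scope.
Local Open Scope complex_scope.

Section QRand.
Variable R : realType.
Local Notation C := R[i].

Definition adjmx m n (A : 'M[C]_(m, n)) : 'M[C]_(n, m) := (map_mx Num.conj A)^T.

Definition qtens n k (A : 'M[C]_(2 ^ n)) (B : 'M[C]_(2 ^ k)) : 'M[C]_(2 ^ (n + k)) :=
  castmx (esym (expnD 2 n k), esym (expnD 2 n k)) (A *t B).

Definition qubit (t : R) : 'cV[C]_2 :=
  \col_(i < 2) (if (i : nat) == 0%N then (cos t)%:C else (sin t)%:C).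

Fixpoint prod_state (n : nat) : (nat -> R) -> 'cV[C]_(2 ^ n) :=
  match n return (nat -> R) -> 'cV[C]_(2 ^ n) with
  | 0%N => fun _ => const_mx 1
  | n'.+1 => fun th =>
      castmx (esym (expnS 2 n'), muln1 1%N)
        (qubit (th 0%N) *t prod_state n' (fun j => th j.+1))
  end.

Definition SB (n : nat) (phi : 'cV[C]_(2 ^ n)) : Prop :=
  exists th : nat -> R,
    (forall j, (j < n)%N -> 0 <= th j < 2 * pi) /\ phi = prod_state n th.

Definition density m (A : 'M[C]_m) : Prop :=
  adjmx A = A /\ (forall x : 'cV[C]_m, 0 <= (adjmx x *m A *m x) 0 0) /\ \tr A = 1.

(* A randomization procedure for a set S of pure n-qubit states, with
   m = n + k qubits in total (k >= 0 ancilla qubits). *)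
Definition randomization (n : nat) (S : 'cV[C]_(2 ^ n) -> Prop) (k N : nat)
  (p : 'I_N -> R) (U : 'I_N -> 'M[C]_(2 ^ (n + k)))
  (rho_a : 'M[C]_(2 ^ k)) (rho0 : 'M[C]_(2 ^ (n + k))) : Prop :=
  (forall i, 0 <= p i) /\ \sum_i p i = 1 /\
  (forall i, U i \is unitarymx) /\ density rho_a /\ density rho0 /\
      (forall phi, S phi ->
        \sum_i (p i)%:C *: (U i *m qtens (phi *m adjmx phi) rho_a *m adjmx (U i))
        = rho0).

Definition entropy N (p : 'I_N -> R) : R :=
  - \sum_i (if p i == 0 then 0 else p i * (ln (p i) / ln 2)).

End QRand.

(* (i) Rotating a qubit of B by 0 or by pi/2 with probability 1/2 each maps
   |b><b| to (|b><b| + |b^perp><b^perp|)/2 = 1/2.  Doing this independently on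
   the n qubits, i.e. applying one of the 2^n product rotations uniformly at
   random, sends every state of S to the maximally mixed state, without any
   ancilla: a randomization with entropy n.

   (ii) Let lam be the largest eigenvalue of rho_a and v a unit eigenvector.
   For phi in S, x = U_i (phi (x) v) satisfies <x, rho0 x> >= p_i lam, as all
   terms of the randomization identity are positive.  But S contains the 2^n
   computational basis states phi_b, whose projectors sum to 1, and
   phi_b phi_b^* (x) rho_a <= lam (phi_b phi_b^* (x) 1); summing the identity
   over b gives 2^n <x, rho0 x> <= lam.  Hence p_i <= 2^-n for all i, and the
   entropy is at least n. *)
From HB Require Import structures.
From mathcomp Require Import all_boot all_order all_algebra.
From mathcomp Require Import spectral.
From mathcomp Require Import complex mxtens.
From mathcomp Require Import reals exp trigo.
From mathcomp Require Import lra.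
Import Order.TTheory GRing.Theory Num.Theory.
Local Open Scope ring_scope.

Section QubitRandomization.
Set Implicit Arguments. Unset Strict Implicit.
Context {R : realType}.
Local Notation C := R[i].
Local Open Scope complex_scope.

Lemma adjmxK m n (A : 'M[C]_(m, n)) : adjmx (adjmx A) = A.
Proof. by apply/matrixP => i j; rewrite !mxE conjCK. Qed.

Lemma adjmx_mul m n p (A : 'M[C]_(m, n)) (B : 'M[C]_(n, p)) :
  adjmx (A *m B) = adjmx B *m adjmx A.
Proof. by rewrite /adjmx map_mxM trmx_mul. Qed.

Lemma adjmx_tens m n p q (A : 'M[C]_(m, n)) (B : 'M[C]_(p, q)) :
  adjmx (A *t B) = adjmx A *t adjmx B.
Proof. by rewrite /adjmx map_mxT trmx_tens. Qed.

Lemma adjmx_cast m m' n n' (e1 : m = m') (e2 : n = n') (A : 'M[C]_(m, n)) :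
  adjmx (castmx (e1, e2) A) = castmx (e2, e1) (adjmx A).
Proof. by case: m' / e1; case: n' / e2; rewrite !castmx_id. Qed.

Lemma adjmx_delta m n (i : 'I_m) (j : 'I_n) :
  adjmx (delta_mx i j : 'M[C]_(m, n)) = delta_mx j i.
Proof. by apply/matrixP => k l; rewrite !mxE conjC_nat andbC. Qed.

Lemma adjmx_scalar m (a : C) : adjmx (a%:M : 'M_m) = (a^*)%:M.
Proof. by rewrite /adjmx map_scalar_mx tr_scalar_mx. Qed.

Lemma adjmx1 m : adjmx (1%:M : 'M[C]_m) = 1%:M.
Proof. by rewrite adjmx_scalar conjC1. Qed.

Lemma unitarymx_adjP n (U : 'M[C]_n) :
  reflect (U *m adjmx U = 1%:M) (U \is unitarymx).
Proof. by rewrite qualifE /adjmx map_trmx; apply: eqP. Qed.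

Lemma unitarymx_adjmxK n (U : 'M[C]_n) : U \is unitarymx -> adjmx U *m U = 1%:M.
Proof.
move=> Uu; have -> : adjmx U = invmx U by rewrite invmx_unitary // /adjmx map_trmx.
by rewrite mulVmx // unitarymx_unit.
Qed.

Lemma mulmx_castmx m m' n n' p p' (e1 : m = m') (e2 e2' : n = n') (e3 : p = p')
    (A : 'M[C]_(m, n)) (B : 'M[C]_(n, p)) :
  castmx (e1, e2) A *m castmx (e2', e3) B = castmx (e1, e3) (A *m B).
Proof.
rewrite (eq_irrelevance e2' e2); clear e2'.
by case: m' / e1; case: n' / e2; case: p' / e3; rewrite !castmx_id.
Qed.

Lemma castmx_sum m m' n n' (e1 : m = m') (e2 : n = n') I (r : seq I) (P : pred I)
    (F : I -> 'M[C]_(m, n)) :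
  castmx (e1, e2) (\sum_(i <- r | P i) F i) = \sum_(i <- r | P i) castmx (e1, e2) (F i).
Proof. by case: m' / e1; case: n' / e2. Qed.

Lemma castmx1 m m' (e1 e2 : m = m') : castmx (e1, e2) (1%:M : 'M[C]_m) = 1%:M.
Proof. by rewrite (eq_irrelevance e2 e1); clear e2; case: m' / e1. Qed.

Lemma castmx_unitarymx m m' (e e' : m = m') (U : 'M[C]_m) :
  (castmx (e, e') U \is unitarymx) = (U \is unitarymx).
Proof. by rewrite (eq_irrelevance e' e); clear e'; case: m' / e. Qed.

Lemma tensmx_suml m n p q I (r : seq I) (P : pred I) (F : I -> 'M[C]_(m, n))
    (B : 'M[C]_(p, q)) :
  (\sum_(i <- r | P i) F i) *t B = \sum_(i <- r | P i) (F i *t B).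
Proof.
apply/matrixP => i j; rewrite !mxE !summxE mulr_suml.
by apply: eq_bigr => k _; rewrite !mxE.
Qed.

Lemma tensmx_sumr m n p q I (r : seq I) (P : pred I) (A : 'M[C]_(m, n))
    (F : I -> 'M[C]_(p, q)) :
  A *t (\sum_(i <- r | P i) F i) = \sum_(i <- r | P i) (A *t F i).
Proof.
apply/matrixP => i j; rewrite !mxE !summxE mulr_sumr.
by apply: eq_bigr => k _; rewrite !mxE.
Qed.

Lemma tensmx1 m n : (1%:M : 'M[C]_m) *t (1%:M : 'M[C]_n) = 1%:M.
Proof.
apply/matrixP => i j.
case: (mxtens_indexP i) => i1 i2; case: (mxtens_indexP j) => j1 j2.
rewrite tensmxE !mxE (can_eq (@mxtens_indexK _ _)) xpair_eqE.
by rewrite -natrM mulnb.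
Qed.

Definition qform n (A : 'M[C]_n) (x : 'cV[C]_n) : C := (adjmx x *m A *m x) 0 0.

Lemma qform_sum n I (r : seq I) (P : pred I) (F : I -> 'M[C]_n) x :
  qform (\sum_(i <- r | P i) F i) x = \sum_(i <- r | P i) qform (F i) x.
Proof. by rewrite /qform mulmx_sumr mulmx_suml summxE. Qed.

Lemma qformZ n (c : C) (A : 'M[C]_n) x : qform (c *: A) x = c * qform A x.
Proof. by rewrite /qform -scalemxAr -scalemxAl mxE. Qed.

Lemma qform_conj m n (W : 'M[C]_(m, n)) (A : 'M[C]_n) x :
  qform (W *m A *m adjmx W) x = qform A (adjmx W *m x).
Proof. by rewrite /qform adjmx_mul adjmxK !mulmxA. Qed.

Lemma qform1E n (x : 'cV[C]_n) : qform 1%:M x = \sum_i `|x i 0| ^+ 2.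
Proof.
by rewrite /qform mulmx1 mxE; apply: eq_bigr => i _; rewrite !mxE normCK mulrC.
Qed.

Lemma qform1_ge0 n (x : 'cV[C]_n) : 0 <= qform 1%:M x.
Proof. by rewrite qform1E sumr_ge0 // => i _; rewrite exprn_ge0. Qed.

Lemma qform1_isometry m n (W : 'M[C]_(m, n)) x :
  adjmx W *m W = 1%:M -> qform 1%:M (W *m x) = qform 1%:M x.
Proof.
by move=> WW; rewrite /qform !mulmx1 adjmx_mul -mulmxA (mulmxA (adjmx W)) WW mul1mx.
Qed.

Lemma qform1_unit n (x : 'cV[C]_n) : adjmx x *m x = 1%:M -> qform 1%:M x = 1.
Proof. by move=> xx; rewrite /qform mulmx1 xx mxE. Qed.

Lemma qform_delta n (A : 'M[C]_n) i : qform A (delta_mx i 0) = A i i.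
Proof. by rewrite /qform adjmx_delta -rowE -colE !mxE. Qed.

Lemma mxtrace_qform n (A : 'M[C]_n) : \tr A = \sum_i qform A (delta_mx i 0).
Proof. by apply: eq_bigr => i _; rewrite qform_delta. Qed.

Lemma mxtrace_le_qform_bound n (A : 'M[C]_n) (lam : C) :
  (forall y, qform A y <= lam * qform 1%:M y) -> \tr A <= lam *+ n.
Proof.
move=> A_le; rewrite mxtrace_qform -[n in lam *+ n]card_ord -sumr_const.
by apply: ler_sum => i _; apply: le_trans (A_le _) _; rewrite qform_delta mxE eqxx mulr1.
Qed.

Lemma qform_diag n (d : 'rV[C]_n) x :
  qform (diag_mx d) x = \sum_i d 0 i * `|x i 0| ^+ 2.
Proof.
rewrite /qform mul_mx_diag mxE; apply: eq_bigr => i _.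
by rewrite !mxE normCK mulrAC [RHS]mulrC [_^* * _]mulrC.
Qed.

Lemma hermitian_spectral n (A : 'M[C]_n) : adjmx A = A ->
  exists2 P : 'M[C]_n, P \is unitarymx & exists d, A = adjmx P *m diag_mx d *m P.
Proof.
move=> Ah; have /orthomx_spectralP : A \is normalmx.
  by apply/normalmxP; rewrite -map_trmx -/(adjmx A) Ah.
move: (spectral_unitarymx A); move: (spectralmx A) (spectral_diag A) => P d Pu AE.
exists P; first exact: Pu.
by exists d; rewrite [LHS]AE invmx_unitary ?Pu /adjmx ?map_trmx.
Qed.

Lemma psdmx_max_eigenvector n (A : 'M[C]_n) : (0 < n)%N ->
  adjmx A = A -> (forall x, 0 <= qform A x) ->
  exists2 lam : R, (forall y, qform A y <= lam%:C * qform 1%:M y) &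
    exists2 v : 'cV[C]_n, adjmx v *m v = 1%:M & qform A v = lam%:C.
Proof.
move=> n_gt0 Ah Apsd; have [P Pu [D AE]] := hermitian_spectral Ah.
have PPadj : P *m adjmx P = 1%:M by exact/unitarymx_adjP.
have qformAE y : qform A y = qform (diag_mx D) (P *m y).
  by rewrite AE -{2}[P]adjmxK qform_conj adjmxK.
pose v l : 'cV[C]_n := adjmx P *m delta_mx l 0.
have qformAv l : qform A (v l) = D 0 l.
  by rewrite qformAE mulmxA PPadj mul1mx qform_delta mxE eqxx mulr1n.
have D_ge0 l : 0 <= D 0 l by rewrite -qformAv.
pose d l := complex.Re (D 0 l).
have dE l : (d l)%:C = D 0 l by rewrite RRe_real ?ger0_real.
have [l0 _ dmax] := Order.TotalTheory.arg_maxP d (isT : xpredT (Ordinal n_gt0)).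
exists (d l0) => [y|].
  rewrite qformAE qform_diag -(qform1_isometry y (unitarymx_adjmxK Pu)) qform1E.
  rewrite mulr_sumr ler_sum // => l _.
  by rewrite -dE ler_wpM2r ?exprn_ge0 // lecR; apply: dmax.
exists (v l0); last by rewrite qformAv dE.
rewrite adjmx_mul adjmxK adjmx_delta -mulmxA (mulmxA P) PPadj mul1mx mul_delta_mx.
by apply/matrixP => i j; rewrite !ord1 !mxE.
Qed.

Lemma ln_exp2n n : ln ((2 ^ n)%:R : R) / ln 2 = n%:R.
Proof.
have ln2_gt0 : 0 < ln (2 : R) by rewrite ln_gt0 // ltr1n.
by rewrite natrX lnXn // mulrnAl mulfV ?gt_eqF.
Qed.

Lemma entropy_ge N (p : 'I_N -> R) (q : R) :
  0 < q -> (forall i, 0 <= p i <= q) -> \sum_i p i = 1 -> - (ln q / ln 2) <= entropy p.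
Proof.
move=> q_gt0 p_bound p_sum.
have ln2_gt0 : 0 < ln (2 : R) by rewrite ln_gt0 // ltr1n.
have -> : - (ln q / ln 2) = \sum_i p i * - (ln q / ln 2) by rewrite -mulr_suml p_sum mul1r.
rewrite /entropy -sumrN; apply: ler_sum => i _; have /andP[p_ge0 p_le] := p_bound i.
have [->|pi_neq0] := eqVneq (p i) 0; first by rewrite mul0r oppr0.
have p_gt0 : 0 < p i by rewrite lt_neqAle eq_sym pi_neq0.
rewrite -[X in _ <= X]mulrN; apply: ler_wpM2l => //.
by rewrite lerN2 ler_pM2r ?invr_gt0 // ler_ln ?posrE.
Qed.

Lemma entropy_uniform N :
  (0 < N)%N -> entropy (fun _ : 'I_N => N%:R^-1 : R) = ln N%:R / ln 2.
Proof.
move=> N_gt0; have N_neq0 : N%:R != 0 :> R by rewrite pnatr_eq0 -lt0n.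
rewrite /entropy invr_eq0 (negbTE N_neq0) sumr_const card_ord lnV ?posrE ?ltr0n //.
by rewrite -mulrnAl -mulr_natr mulVf // mul1r mulNr opprK.
Qed.

Lemma conj_real (x : R) : Num.conj (x%:C) = x%:C.
Proof. exact: conjc_real. Qed.

Lemma qubit_isometry (t : R) : adjmx (qubit t) *m qubit t = 1%:M.
Proof.
apply/matrixP => i j; rewrite !ord1 !mxE !big_ord_recr big_ord0 /= !mxE /=.
by rewrite add0r !conj_real -!rmorphM -rmorphD -!expr2 cos2Dsin2.
Qed.

Definition rot (t : R) : 'M[C]_2 := \matrix_(i, j)
  (if i == j then cos t else if (i : nat) == 0%N then - sin t else sin t)%:C.

Lemma rot_qubit (t s : R) : rot t *m qubit s = qubit (t + s).
Proof.
apply/matrixP => i j; rewrite !mxE !big_ord_recr big_ord0 /= !mxE /= add0r cosD sinD.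
by case: i => [[|[|//]] ?] /=; rewrite -!rmorphM -rmorphD // mulNr addrC.
Qed.

Lemma rot_unitarymx (t : R) : rot t \is unitarymx.
Proof.
apply/unitarymx_adjP/matrixP => i j.
rewrite !mxE !big_ord_recr big_ord0 /= !mxE /= add0r.
case: i => [[|[|//]] ?]; case: j => [[|[|//]] ?] /=;
  rewrite ?conj_real ?rmorphN /= -?rmorphN -!rmorphM -rmorphD.
all: apply: (congr1 (real_complex R)); have := cos2Dsin2 t; lra.
Qed.

Lemma qubit_basis_sum (t : R) :
  \sum_(b < 2) qubit (b%:R * (pi / 2) + t) *m adjmx (qubit (b%:R * (pi / 2) + t)) = 1%:M.
Proof.
rewrite !big_ord_recr big_ord0 /= add0r mul0r add0r mul1r.
apply/matrixP => i j; rewrite !mxE !big_ord1 !mxE cosD sinD cos_pihalf sin_pihalf.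
case: i => [[|[|//]] ?]; case: j => [[|[|//]] ?] /=;
  rewrite !conj_real -!rmorphM -rmorphD.
all: apply: (congr1 (real_complex R)); have := cos2Dsin2 t; lra.
Qed.

Lemma prod_stateS n (th : nat -> R) : prod_state n.+1 th =
  castmx (esym (expnS 2 n), muln1 1) (qubit (th 0%N) *t prod_state n (fun j => th j.+1)).
Proof. by []. Qed.

Lemma prod_state_isometry n (th : nat -> R) :
  adjmx (prod_state n th) *m prod_state n th = 1%:M.
Proof.
elim: n th => [|n IHn] th.
  by apply/matrixP => i j; rewrite !ord1 !mxE big_ord1 !mxE conjC1 mulr1.
rewrite prod_stateS adjmx_cast mulmx_castmx adjmx_tens tensmx_mul.
by rewrite qubit_isometry IHn tensmx1 castmx1.
Qed.

Fixpoint rotn n : (nat -> R) -> 'M[C]_(2 ^ n) :=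
  match n with
  | 0%N => fun _ => 1%:M
  | n'.+1 => fun th => castmx (esym (expnS 2 n'), esym (expnS 2 n'))
                        (rot (th 0%N) *t rotn n' (fun j => th j.+1))
  end.

Lemma rotnS n (th : nat -> R) : rotn n.+1 th =
  castmx (esym (expnS 2 n), esym (expnS 2 n)) (rot (th 0%N) *t rotn n (fun j => th j.+1)).
Proof. by []. Qed.

Lemma rotn_unitarymx n (th : nat -> R) : rotn n th \is unitarymx.
Proof.
apply/unitarymx_adjP; elim: n th => [|n IHn] th /=; first by rewrite adjmx1 mulmx1.
rewrite adjmx_cast mulmx_castmx adjmx_tens tensmx_mul IHn.
by have /unitarymx_adjP -> := rot_unitarymx (th 0%N); rewrite tensmx1 castmx1.
Qed.

Lemma rotn_prod_state n (th th' : nat -> R) :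
  rotn n th *m prod_state n th' = prod_state n (fun j => th j + th' j).
Proof.
elim: n th th' => [|n IHn] th th'; first by rewrite mul1mx.
by rewrite rotnS prod_stateS mulmx_castmx tensmx_mul rot_qubit IHn.
Qed.

Definition splitb n (b : 'I_(2 ^ n.+1)) : 'I_2 * 'I_(2 ^ n) :=
  mxtens_unindex (cast_ord (expnS 2 n) b).

Definition joinb n (b : 'I_2 * 'I_(2 ^ n)) : 'I_(2 ^ n.+1) :=
  cast_ord (esym (expnS 2 n)) (mxtens_index b).

Lemma joinbK n : cancel (@joinb n) (@splitb n).
Proof. by move=> b; rewrite /splitb /joinb cast_ordKV mxtens_indexK. Qed.

Lemma splitbK n : cancel (@splitb n) (@joinb n).
Proof. by move=> b; rewrite /splitb /joinb mxtens_unindexK cast_ordK. Qed.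

Lemma sum_joinb n (V : nmodType) (F : 'I_(2 ^ n.+1) -> V) :
  \sum_b F b = \sum_(b1 < 2) \sum_(b2 < 2 ^ n) F (joinb (b1, b2)).
Proof.
rewrite pair_bigA (reindex (@joinb n)) /=; first by apply: eq_bigr => -[].
by exists (@splitb n) => b _; rewrite ?joinbK ?splitbK.
Qed.

(* The angles of the computational basis state |b>: qubit j is |0> (angle 0)
   or |1> (angle pi/2) according to bit j of b, most significant bit first. *)
Fixpoint basis_angle n : 'I_(2 ^ n) -> nat -> R :=
  match n with
  | 0%N => fun _ _ => 0
  | n'.+1 => fun b j =>
      if j is j'.+1 then basis_angle (splitb b).2 j' else ((splitb b).1 : nat)%:R * (pi / 2)
  end.

Lemma basis_angleS n (b : 'I_(2 ^ n.+1)) : basis_angle b =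
  fun j => if j is j'.+1 then basis_angle (splitb b).2 j' else ((splitb b).1 : nat)%:R * (pi / 2).
Proof. by []. Qed.

Lemma basis_angle_joinb n b1 (b2 : 'I_(2 ^ n)) :
  basis_angle (joinb (b1, b2)) =
  fun j => if j is j'.+1 then basis_angle b2 j' else (b1 : nat)%:R * (pi / 2).
Proof. by rewrite basis_angleS joinbK. Qed.

Lemma basis_angle_range n (b : 'I_(2 ^ n)) j : 0 <= basis_angle b j < 2 * pi.
Proof.
elim: n b j => [|n IHn] b [|j] /=; rewrite ?IHn ?lexx ?mulr_gt0 ?pi_gt0 //.
have pi_gt0 : 0 < pi :> R := pi_gt0 R.
have : ((splitb b).1 : nat)%:R <= 1%:R :> R by rewrite ler_nat -ltnS.
have : 0 <= ((splitb b).1 : nat)%:R :> R := ler0n _ _.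
move: ((splitb b).1 : nat)%:R => x; nra.
Qed.

Lemma basis_outer_sum n (th : nat -> R) :
  \sum_(b < 2 ^ n) prod_state n (fun j => basis_angle b j + th j) *m
                   adjmx (prod_state n (fun j => basis_angle b j + th j)) = 1%:M.
Proof.
elim: n th => [|n IHn] th.
  rewrite big_ord1; apply/matrixP => i j.
  by rewrite !ord1 !mxE big_ord1 !mxE conjC1 mulr1.
rewrite sum_joinb.
under eq_bigr => b1 _ do under eq_bigr => b2 _ do
  rewrite basis_angle_joinb prod_stateS adjmx_cast mulmx_castmx adjmx_tens tensmx_mul.
under eq_bigr => b1 _ do rewrite -castmx_sum -tensmx_sumr IHn.
by rewrite -castmx_sum -tensmx_suml qubit_basis_sum tensmx1 castmx1.
Qed.

Definition lift_state n k (u : 'cV[C]_(2 ^ n)) : 'M[C]_(2 ^ (n + k), 2 ^ k) :=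
  castmx (esym (expnD 2 n k), mul1n _) (u *t 1%:M).

Lemma qtens_outer n k (u : 'cV[C]_(2 ^ n)) (A : 'M[C]_(2 ^ k)) :
  qtens (u *m adjmx u) A = lift_state k u *m A *m adjmx (lift_state k u).
Proof.
rewrite -[A in RHS](castmxKV (mul1n _) (mul1n _)) -tens_scalar1mx.
rewrite /lift_state adjmx_cast adjmx_tens adjmx1 !mulmx_castmx !tensmx_mul.
by rewrite mulmx1 mul1mx mulmx1.
Qed.

Lemma lift_state_isometry n k (u : 'cV[C]_(2 ^ n)) : adjmx u *m u = 1%:M ->
  adjmx (lift_state k u) *m lift_state k u = 1%:M.
Proof.
move=> uu; rewrite /lift_state adjmx_cast mulmx_castmx adjmx_tens tensmx_mul uu.
by rewrite adjmx1 mulmx1 tensmx1 castmx1.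
Qed.

Lemma qtens_suml n k I (r : seq I) (P : pred I) (F : I -> 'M[C]_(2 ^ n))
    (B : 'M[C]_(2 ^ k)) :
  qtens (\sum_(i <- r | P i) F i) B = \sum_(i <- r | P i) qtens (F i) B.
Proof. by rewrite /qtens tensmx_suml castmx_sum. Qed.

Lemma lift_state_outer_sum n k I (r : seq I) (u : I -> 'cV[C]_(2 ^ n)) :
  \sum_(i <- r) u i *m adjmx (u i) = 1%:M ->
  \sum_(i <- r) lift_state k (u i) *m adjmx (lift_state k (u i)) = 1%:M.
Proof.
move=> u_sum; under eq_bigr => i _ do rewrite -[X in X *m adjmx _]mulmx1 -qtens_outer.
by rewrite -qtens_suml u_sum /qtens tensmx1 castmx1.
Qed.

Section RandomizationBound.
Variables (n k N : nat) (p : 'I_N -> R) (U : 'I_N -> 'M[C]_(2 ^ (n + k))).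
Variables (rho_a : 'M[C]_(2 ^ k)) (rho0 : 'M[C]_(2 ^ (n + k))).
Hypothesis rand : randomization (@SB R n) p U rho_a rho0.

Lemma randomization_qformE phi x : SB phi ->
  qform rho0 x =
  \sum_j (p j)%:C * qform rho_a (adjmx (lift_state k phi) *m (adjmx (U j) *m x)).
Proof.
case: rand => _ [_ [_ [_ [_ twirl]]]] /twirl <-; rewrite qform_sum.
by apply: eq_bigr => j _; rewrite qformZ qtens_outer !qform_conj.
Qed.

Lemma randomization_qform_ge i phi w : SB phi -> adjmx phi *m phi = 1%:M ->
  (p i)%:C * qform rho_a w <= qform rho0 (U i *m (lift_state k phi *m w)).
Proof.
move=> Sphi phi_unit; case: rand => p_ge0 [_ [U_unitary [[_ [rho_a_psd _]] _]]].
rewrite (randomization_qformE _ Sphi) (bigD1 i) //= (mulmxA (adjmx (U i))).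
rewrite unitarymx_adjmxK // mul1mx mulmxA lift_state_isometry // mul1mx lerDl.
by rewrite sumr_ge0 // => j _; apply: mulr_ge0; [rewrite ler0c | apply: rho_a_psd].
Qed.

Lemma randomization_qform_le lam x :
  (forall y, qform rho_a y <= lam%:C * qform 1%:M y) ->
  qform rho0 x *+ 2 ^ n <= lam%:C * qform 1%:M x.
Proof.
move=> rho_a_le; case: rand => p_ge0 [p_sum [U_unitary _]].
pose phi (b : 'I_(2 ^ n)) : 'cV[C]_(2 ^ n) := prod_state n (fun j => basis_angle b j + 0).
have Sphi b : SB (phi b).
  by exists (fun j => basis_angle b j + 0); split => // j _; rewrite addr0 basis_angle_range.
have -> : qform rho0 x *+ 2 ^ n = \sum_(b < 2 ^ n) qform rho0 x.
  by rewrite sumr_const card_ord.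
under eq_bigr => b _ do rewrite (randomization_qformE x (Sphi b)).
have -> : lam%:C * qform 1%:M x = \sum_j (p j)%:C * (lam%:C * qform 1%:M x).
  by rewrite -mulr_suml -rmorph_sum p_sum mul1r.
rewrite exchange_big /=; apply: ler_sum => j _; rewrite -mulr_sumr.
apply: ler_wpM2l; first by rewrite ler0c.
apply: le_trans (_ : \sum_b lam%:C * qform (lift_state k (phi b) *m adjmx (lift_state k (phi b)))
                           (adjmx (U j) *m x) <= _).
  by apply: ler_sum => b _; apply: le_trans (rho_a_le _) _; rewrite -qform_conj mulmx1.
rewrite -mulr_sumr -qform_sum lift_state_outer_sum ?basis_outer_sum //.
by rewrite qform1_isometry // adjmxK; apply/unitarymx_adjP.
Qed.

Lemma randomization_prob_le i : p i <= (2 ^ n)%:R^-1.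
Proof.
case: (rand) => p_ge0 [_ [_ [[rho_a_herm [rho_a_psd rho_a_tr]] _]]].
have [lam rho_a_le [v v_unit rho_a_v]] :=
  psdmx_max_eigenvector (expn_gt0 2 k) rho_a_herm rho_a_psd.
have lam_gt0 : 0 < lam.
  have := mxtrace_le_qform_bound rho_a_le; rewrite rho_a_tr -rmorphMn lecR => tr_le.
  by rewrite -(pmulrn_lgt0 _ (expn_gt0 2 k)) (lt_le_trans ltr01).
pose phi : 'cV[C]_(2 ^ n) := prod_state n (fun _ => 0).
have Sphi : SB phi by exists (fun _ => 0); split => // j _; rewrite lexx mulr_gt0 ?pi_gt0.
pose x := U i *m (lift_state k phi *m v).
have x_unit : qform 1%:M x = 1.
  case: rand => _ [_ [U_unitary _]].
  rewrite qform1_isometry ?unitarymx_adjmxK // qform1_isometry ?qform1_unit //.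
  exact/lift_state_isometry/prod_state_isometry.
have := randomization_qform_le x rho_a_le; rewrite x_unit mulr1.
have := randomization_qform_ge i v Sphi (prod_state_isometry n _); rewrite rho_a_v.
move=> /(ler_wMn2r (2 ^ n)) /le_trans le_lam /le_lam.
rewrite -rmorphM -rmorphMn lecR -mulrnAl -[X in _ <= X -> _]mul1r ler_pM2r //.
by rewrite -div1r ler_pdivlMr ?ltr0n ?expn_gt0 // mulr_natr.
Qed.

End RandomizationBound.

Lemma rotn_twirl n (th : nat -> R) :
  \sum_(b < 2 ^ n) rotn n (basis_angle b) *m (prod_state n th *m adjmx (prod_state n th))
                   *m adjmx (rotn n (basis_angle b)) = 1%:M.
Proof.
under eq_bigr do rewrite mulmxA -mulmxA -adjmx_mul rotn_prod_state.
exact: basis_outer_sum.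
Qed.

Definition twirl_unitary n (b : 'I_(2 ^ n)) : 'M[C]_(2 ^ (n + 0)) :=
  castmx (congr1 (expn 2) (esym (addn0 n)), congr1 (expn 2) (esym (addn0 n)))
    (rotn n (basis_angle b)).

Lemma qtens_ancilla0 n (A : 'M[C]_(2 ^ n)) :
  qtens A (1%:M : 'M[C]_(2 ^ 0)) =
  castmx (congr1 (expn 2) (esym (addn0 n)), congr1 (expn 2) (esym (addn0 n))) A.
Proof.
rewrite /qtens tens_mx_scalar scale1r castmx_comp.
by congr castmx; congr pair; apply: eq_irrelevance.
Qed.

Lemma density_scalar m (c : R) : 0 <= c -> c *+ m = 1 -> density ((c%:C)%:M : 'M[C]_m).
Proof.
move=> c_ge0 c_sum; split; first by rewrite adjmx_scalar conj_real.
split=> [x|]; last by rewrite mxtrace_scalar -rmorphMn c_sum.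
by rewrite -/(qform _ x) -scalemx1 qformZ mulr_ge0 ?ler0c ?qform1_ge0.
Qed.

Lemma twirl_randomization n :
  randomization (@SB R n) (fun _ => (2 ^ n)%:R^-1) (@twirl_unitary n)
    1%:M (((2 ^ n)%:R^-1)%:C)%:M.
Proof.
have N_gt0 : (0 < (2 ^ n)%:R :> R) by rewrite ltr0n expn_gt0.
have uniform_sum : (2 ^ n)%:R^-1 *+ 2 ^ n = 1 :> R.
  by rewrite -[LHS]mulr_natr mulVf ?gt_eqF.
split=> [b|]; first by rewrite invr_ge0 ltW.
split; first by rewrite sumr_const card_ord.
split=> [b|]; first by rewrite castmx_unitarymx rotn_unitarymx.
split; first exact: (@density_scalar 1 1).
split; first by rewrite addn0; apply: density_scalar; rewrite ?invr_ge0 ?ltW.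
move=> _ [th [_ ->]]; rewrite qtens_ancilla0 -scalemx1 -scaler_sumr.
under eq_bigr do rewrite adjmx_cast !mulmx_castmx.
by rewrite -castmx_sum rotn_twirl castmx1.
Qed.

End QubitRandomization.

Theorem corollary11 (R : realType) (n : nat) (hn : (1 <= n)%N) :
  (exists (k N : nat) (p : 'I_N -> R) (U : 'I_N -> 'M[R[i]]_(2 ^ (n + k)))
          (rho_a : 'M[R[i]]_(2 ^ k)) (rho0 : 'M[R[i]]_(2 ^ (n + k))),
      randomization (@SB R n) p U rho_a rho0 /\ entropy p = n%:R)
  /\
  (forall (k N : nat) (p : 'I_N -> R) (U : 'I_N -> 'M[R[i]]_(2 ^ (n + k)))
          (rho_a : 'M[R[i]]_(2 ^ k)) (rho0 : 'M[R[i]]_(2 ^ (n + k))),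
      randomization (@SB R n) p U rho_a rho0 -> n%:R <= entropy p).
Proof.
split.
  exists 0%N, (2 ^ n)%N; do 4 eexists; split; first exact: twirl_randomization.
  by rewrite entropy_uniform ?expn_gt0 // ln_exp2n.
move=> k N p U rho_a rho0 rand.
have -> : n%:R = - (ln ((2 ^ n)%:R^-1 : R) / ln 2).
  by rewrite lnV ?posrE ?ltr0n ?expn_gt0 // mulNr opprK ln_exp2n.
apply: entropy_ge; first by rewrite invr_gt0 ltr0n expn_gt0.
  by move=> i; case: (rand) => p_ge0 _; rewrite p_ge0 (randomization_prob_le rand).
by case: rand => _ [].
Qed.
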